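(* Let $u\in\mathcal{B}^N$, $m\in\mathbb{R}$, $\varepsilon>0$, $(r,\sigma)\in F(N,A,u,m)$ and $(t,\sigma)\in F(N,A,u,m-\varepsilon)$ such that $r_a>t_a$ for each $a\in A$. Suppose there is no $i\in N$ and $a\in A$ with $r_a>b_i>t_a$. Then $\sigma$ is a minimum weight perfect matching in $\mathcal{F}^u_\kappa(t)$.
   Context: Fix a finite set $\{\rho_1,\dots,\rho_k\}\subseteq\mathbb{R}_+$ with $\rho_1=0$. $N=\{1,\dots,n\}$ agents, $A$ a set of $n$ rooms. $\mathcal{B}$ is the set of utility functions $u_i(r_a,a)=v^i_a-r_a-\rho_i\max\{0,r_a-b_i\}$ with $v^i\in\mathbb{R}^A$, $b_i\ge0$, $\rho_i\in\{\rho_1,\dots,\rho_k\}$. An allocation for $(N,A,u,m)$ is $(r,\sigma)$ with $\sigma:N\to A$ a bijection, $r\in\mathbb{R}^A$, $\sum_ar_a=m$; envy-free means $u_i(r_{\sigma(i)},\sigma(i))\ge u_i(r_{\sigma(j)},\sigma(j))$ for all $i,j$; $F(N,A,u,m)$ is the set of envy-free allocations. $\kappa_{ia}(u,t)=1+\rho_i$ if $t_a\ge b_i$ and $1$ otherwise (absolute marginal disutility of an increase of rent of room $a$ at $t$). For $t$ with some envy-free $(t,\sigma)$, $\mathcal{F}(t)$ is the bipartite graph on $N\cup A$ with edge $(i,a)$ iff $u_i(t_{\sigma(i)},\sigma(i))=u_i(t_a,a)$, and $\mathcal{F}^u_\kappa(t)$ has weights $w(i,a)=\log\kappa_{ia}(u,t)$;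 a minimum weight perfect matching is a bijection $\mu:N\to A$ using only edges of $\mathcal{F}(t)$ minimizing $\sum_iw(i,\mu(i))$ among such. *)

From HB Require Import structures.
From mathcomp Require Import all_boot all_order all_algebra.
From mathcomp Require Import all_classical all_reals all_analysis.
Set Implicit Arguments. Unset Strict Implicit. Unset Printing Implicit Defensive.
Import Order.TTheory GRing.Theory Num.Theory.
Local Open Scope ring_scope.

(* Agents N = 'I_n, rooms A : finType with #|A| = n.
   A utility profile u in B^N is given by v i a (= v^i_a), b i, rho i. *)

Section Defs.
Variables (R : realType) (n : nat) (A : finType).
Variables (v : 'I_n -> A -> R) (b : 'I_n -> R) (rho : 'I_n -> R).

Definition util (i : 'I_n) (x : R) (a : A) : R :=
  v i a - x - rho i * Num.max 0 (x - b i).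

Definition allocation (m : R) (r : A -> R) (sigma : 'I_n -> A) : Prop :=
  bijective sigma /\ \sum_(a : A) r a = m.

Definition envy_free (m : R) (r : A -> R) (sigma : 'I_n -> A) : Prop :=
  allocation m r sigma /\
  forall i j : 'I_n, util i (r (sigma j)) (sigma j) <= util i (r (sigma i)) (sigma i).

Definition kappa (t : A -> R) (i : 'I_n) (a : A) : R :=
  if b i <= t a then 1 + rho i else 1.

Definition Fedge (t : A -> R) (sigma : 'I_n -> A) (i : 'I_n) (a : A) : Prop :=
  util i (t (sigma i)) (sigma i) = util i (t a) a.

Definition weight (t : A -> R) (i : 'I_n) (a : A) : R := ln (kappa t i a).

Definition perfect_matching (t : A -> R) (sigma mu : 'I_n -> A) : Prop :=
  bijective mu /\ forall i, Fedge t sigma i (mu i).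

Definition min_weight_pm (t : A -> R) (sigma mu : 'I_n -> A) : Prop :=
  perfect_matching t sigma mu /\
  forall mu' : 'I_n -> A, perfect_matching t sigma mu' ->
    \sum_(i < n) weight t i (mu i) <= \sum_(i < n) weight t i (mu' i).
End Defs.

From HB Require Import structures.
From mathcomp Require Import all_boot all_order all_algebra.
From mathcomp Require Import all_classical all_reals all_analysis.
From mathcomp Require Import ring lra.
Import Order.TTheory GRing.Theory Num.Theory.
Local Open Scope ring_scope.

(* Since no kink b_i lies strictly between t_a and r_a, the utility of agent i
   drops linearly from t_a to r_a with slope kappa_ia(t):
   u_i(r_a, a) = u_i(t_a, a) - kappa_ia(t) (r_a - t_a).  Envy-freeness of
   (r, sigma) against an equally good room a of F(t) then gives
   kappa_{i sigma(i)} d_{sigma(i)} <= kappa_ia d_a with d = r - t > 0.  Taking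
   logarithms and summing along any perfect matching mu, the terms ln d_a add up
   to the same total for mu and sigma, since both are bijections onto A. *)

Lemma ler_sum_ln_bij (R : realType) (n : nat) (A : finType)
    (k : 'I_n -> A -> R) (d : A -> R) (sigma mu : 'I_n -> A) :
  bijective sigma -> bijective mu ->
  (forall i a, 0 < k i a) -> (forall a, 0 < d a) ->
  (forall i, k i (sigma i) * d (sigma i) <= k i (mu i) * d (mu i)) ->
  \sum_(i < n) ln (k i (sigma i)) <= \sum_(i < n) ln (k i (mu i)).
Proof.
move=> bij_sigma bij_mu k_gt0 d_gt0 le_kd.
have sum_ln_d (nu : 'I_n -> A) : bijective nu ->
    \sum_(i < n) ln (d (nu i)) = \sum_(a : A) ln (d a).
  by move=> bij_nu; rewrite (reindex nu) //; exact: onW_bij.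
rewrite -(lerD2r (\sum_(i < n) ln (d (sigma i)))).
rewrite [X in _ <= _ + X]sum_ln_d // -(sum_ln_d mu) // -!big_split /=.
apply: ler_sum => i _; rewrite -!lnM ?posrE //.
by rewrite ler_ln ?posrE ?mulr_gt0.
Qed.

Section Utilities.
Variables (R : realType) (n : nat) (A : finType).
Variables (v : 'I_n -> A -> R) (b : 'I_n -> R) (rho : 'I_n -> R).
Hypothesis rho_ge0 : forall i, 0 <= rho i.

Lemma kappa_gt0 (t : A -> R) i a : 0 < kappa b rho t i a.
Proof. by rewrite /kappa; case: ifP => _ //; have := rho_ge0 i; lra. Qed.

Lemma util_kappa_slope (r t : A -> R) i a :
  t a <= r a -> ~ (t a < b i /\ b i < r a) ->
  util v b rho i (r a) a
    = util v b rho i (t a) a - kappa b rho t i a * (r a - t a).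
Proof.
move=> le_tr no_kink; rewrite /util /kappa; case: ifP => [le_bt | /negbT].
  by rewrite !max_r ?subr_ge0 ?(le_trans le_bt) //; ring.
rewrite -ltNge => lt_tb; have le_rb : r a <= b i.
  by rewrite leNgt; apply/negP => lt_br; exact: no_kink.
by rewrite !max_l ?subr_le0 ?(ltW lt_tb) //; ring.
Qed.

Lemma envy_free_kappa_le (m : R) (r t : A -> R) (sigma : 'I_n -> A) i a :
  envy_free v b rho m r sigma -> (forall a, t a <= r a) ->
  (forall i a, ~ (t a < b i /\ b i < r a)) -> Fedge v b rho t sigma i a ->
  kappa b rho t i (sigma i) * (r (sigma i) - t (sigma i))
    <= kappa b rho t i a * (r a - t a).
Proof.
move=> [[[g sigmaK gK] _] no_envy] le_tr no_kink edge_ia.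
have := no_envy i (g a); rewrite gK !(util_kappa_slope _ _ _ _ (le_tr _)) //.
by rewrite -edge_ia; lra.
Qed.

End Utilities.

Theorem lemma7 (R : realType) (rhos : seq R)
    (hrhos0 : head 1 rhos = 0) (hrhos : all (fun x => 0 <= x) rhos)
    (n : nat) (A : finType) (hA : #|A| = n)
    (v : 'I_n -> A -> R) (b : 'I_n -> R) (rho : 'I_n -> R)
    (hb : forall i, 0 <= b i) (hrho : forall i, rho i \in rhos)
    (m eps : R) (heps : 0 < eps) (r t : A -> R) (sigma : 'I_n -> A)
    (hr : envy_free v b rho m r sigma)
    (ht : envy_free v b rho (m - eps) t sigma)
    (hrt : forall a, t a < r a)
    (hno : ~ (exists (i : 'I_n) (a : A), t a < b i /\ b i < r a)) :
  min_weight_pm v b rho t sigma sigma.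
Proof.
have rho_ge0 i : 0 <= rho i by exact: (allP hrhos _ (hrho i)).
have no_kink i a : ~ (t a < b i /\ b i < r a) by move=> kink; apply: hno; exists i, a.
have le_tr a : t a <= r a by exact: ltW.
have bij_sigma : bijective sigma by case: hr => [[]].
split; first by split.
move=> mu [bij_mu edge_mu].
apply: (@ler_sum_ln_bij R n A _ (fun a => r a - t a)) => //.
- by move=> i a; exact: kappa_gt0.
- by move=> a; rewrite subr_gt0.
- by move=> i /=; apply: envy_free_kappa_le hr le_tr no_kink (edge_mu i).
Qed.
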